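(* Let $0\neq g\in L^2(\mathbb{R})$ be a real-valued function. Suppose that $(a,b)\in\mathbb{R}^2$ is such that $\mathcal{G}(g,\Lambda_0)$ is linearly independent in $L^2(\mathbb{R})$, where $\Lambda_0=\{(0,0),(0,1),(0,-1),(a,b),(a,-b)\}$. Then for every $0\neq c\in\mathbb{R}$, the set $\mathcal{G}(g,\Lambda)$ is linearly independent in $L^2(\mathbb{R})$, where $\Lambda=\{(0,0),(0,1),(c,0),(a,b)\}$.
   Context: For $a,b\in\mathbb{R}$ and a function $f$ on $\mathbb{R}$, the translation operator is $T_af(x)=f(x-a)$ and the modulation operator is $M_bf(x)=e^{2\pi i bx}f(x)$. For $g\in L^2(\mathbb{R})$ and a finite set $\Lambda=\{(a_k,b_k)\}_{k=1}^N\subset\mathbb{R}^2$, $\mathcal{G}(g,\Lambda)=\{M_{b_k}T_{a_k}g\}_{k=1}^N=\{e^{2\pi i b_k x}g(x-a_k): k=1,\dots,N\}$. Linear independence means: if $c_1,\dots,c_N\in\mathbb{C}$ satisfy $\sum_{k=1}^N c_k e^{2\pi i b_k x}g(x-a_k)=0$ for almost every $x\in\mathbb{R}$, then $c_1=\dots=c_N=0$. *)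

From HB Require Import structures.
From mathcomp Require Import all_boot all_order all_algebra.
From mathcomp Require Import all_classical all_reals all_analysis.
From mathcomp Require Import complex.
Set Implicit Arguments. Unset Strict Implicit. Unset Printing Implicit Defensive.
Import Order.TTheory GRing.Theory Num.Theory.
Local Open Scope ring_scope.

Definition expi {R : realType} (t : R) : R[i] := Complex (cos t) (sin t).

(* The time-frequency shift  M_b T_a g (x) = e^{2 pi i b x} g(x - a),
   viewed as a complex-valued function. *)
Definition TFshift {R : realType} (g : R -> R) (p : R * R) : R -> R[i] :=
  fun x => expi (2 * pi * p.2 * x) * ((g (x - p.1))%:C)%C.

Definition L2fun {R : realType} (g : R -> R) : Prop :=
  measurable_fun [set: R] g /\
  (@lebesgue_measure R).-integrable [set: R] (fun x => ((g x) ^+ 2)%:E).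

Definition nonzero_ae {R : realType} (g : R -> R) : Prop :=
  ~ {ae (@lebesgue_measure R), forall x, g x = 0}.

Definition gabor_lin_indep {R : realType} (g : R -> R) (L : seq (R * R)) : Prop :=
  forall c : 'I_(size L) -> R[i],
    {ae (@lebesgue_measure R), forall x,
       \sum_(k < size L) c k * TFshift g (nth (0, 0) L k) x = 0} ->
    forall k, c k = 0.

From HB Require Import structures.
From mathcomp Require Import all_boot all_order all_algebra.
From mathcomp Require Import all_classical all_reals all_analysis.
From mathcomp Require Import complex measurable_realfun lra ring.
Import Order.TTheory GRing.Theory Num.Theory.
Local Open Scope ring_scope.
Local Open Scope classical_set_scope.

(* Let [S = c0 g + c1 M_1 g + c2 T_c g + c3 M_b T_a g] vanish.  Since [g] is
   real, conjugation maps [M_b T_a g] to [M_{-b} T_a g], so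
   [conj c2 * S - c2 * conj S] is a combination over [Lambda_0] in which the
   [T_c g] term cancels; hence [conj c2 * c1 = conj c2 * c3 = 0].  If [c2] were
   nonzero, we would be left with [c0 g + c2 T_c g = 0], i.e. [T_c g = l g] for
   a real [l].  Translation invariance of [\int g^2] then forces [l^2 = 1] or
   [g = 0], and an integrable [c]-periodic [g^2] vanishes as well.  So
   [c2 = 0], and [S = 0] is again a relation over [Lambda_0]. *)

(* The library's [Hint Extern] for a.e. filters does not fire on
   [lebesgue_measure], whose carrier is a generated sigma-algebra type. *)
#[local] Instance lebesgue_ae_filter (R : realType) :
  Filter (nbhs (almost_everywhere (@lebesgue_measure R))) :=
  ae_filter_ringOfSetsType _.

Lemma ae_eq0_ge0_integral_eq0 d (T : measurableType d) (R : realType)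
    (mu : {measure set T -> \bar R}) (h : T -> R) :
  measurable_fun setT h -> (forall x, 0 <= h x) ->
  (\int[mu]_x (h x)%:E = 0)%E -> {ae mu, forall x, h x = 0}.
Proof.
move=> mh h0 int0.
have : ae_eq mu setT (EFin \o h) (cst 0%E).
  apply/ae_eq_integral_abs => //; first exact/measurable_EFinP.
  by rewrite -int0; apply: eq_integral => x _; rewrite gee0_abs // lee_fin.
by apply: filterS => x /(_ I) [].
Qed.

Section LebesgueTranslation.
Context {R : realType}.
Local Notation mu := (@lebesgue_measure R).

Lemma measurable_addr (t : R) : measurable_fun setT (fun x : R => x + t).
Proof. exact: measurable_funD. Qed.

Lemma lebesgue_measure_addr (t : R) (A : set R) : measurable A ->
  mu ((fun x => x + t) @^-1` A) = mu A.
Proof.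
move=> mA.
change (pushforward mu (fun x : R => (x + t : measurableTypeR R)) A = mu A).
apply/esym/lebesgue_measure_unique => //; first exact: measurable_addr.
move=> ? _ [[a b] _ <-]; rewrite /pushforward /=.
have itvE : (fun x => x + t) @^-1` `]a, b] = `](a - t), (b - t)]%classic.
  by apply/seteqP; split => x /=; rewrite !in_itv /= => /andP[? ?];
    apply/andP; split; lra.
transitivity (mu ((fun x => x + t) @^-1` `]a, b])) => //.
rewrite itvE !lebesgue_measure_itv/= !lte_fin ltrD2r.
by rewrite -!EFinD opprB addrA subrK.
Qed.

Lemma ae_addr (t : R) (P : R -> Prop) :
  {ae mu, forall x, P x} -> {ae mu, forall x, P (x + t)}.
Proof.
case=> N [mN N0 PN]; exists ((fun x => x + t) @^-1` N); split => //.
- by rewrite -[X in measurable X]setTI; exact: measurable_addr.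
- by rewrite lebesgue_measure_addr.
- by move=> x /= nP; apply: PN.
Qed.

Lemma ge0_integral_addr (t : R) (f : R -> \bar R) :
  measurable_fun setT f -> (forall x, 0 <= f x)%E ->
  (\int[mu]_x f (x + t)%R = \int[mu]_x f x)%E.
Proof.
move=> mf f0.
have := @ge0_integral_pushforward _ _ (measurableTypeR R) (measurableTypeR R) R
  _ (measurable_addr t) mu setT f measurableT mf (fun y _ => f0 y).
rewrite preimage_setT /= => <-.
apply: eq_measure_integral; first exact: measurable_addr.
by move=> ? A mA _; exact: lebesgue_measure_addr.
Qed.

(* Compare [h] against the bounded, strictly increasing weight
   [w = atan + pi/2]: periodicity and translation invariance give
   [\int h(x) w(x + c) = \int h(x) w(x)], although [w(x + c) > w(x)]. *)
Lemma ae_eq0_periodic (h : R -> R) (c : R) :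
  measurable_fun setT h -> (forall x, 0 <= h x) ->
  mu.-integrable setT (EFin \o h) -> 0 < c ->
  {ae mu, forall x, h (x - c) = h x} -> {ae mu, forall x, h x = 0}.
Proof.
move=> mh h0 hint c_gt0 hper.
pose w (x : R) := atan x + pi / 2.
have w_bnd x : 0 <= w x <= pi.
  by rewrite /w; have := atan_gtNpi2 x; have := atan_ltpi2 x; lra.
have w_lt x : w x < w (x + c) by rewrite /w ltrD2r; apply: lt_atan; lra.
have mw : measurable_fun setT w.
  apply: measurable_funD => //.
  by apply: continuous_measurable_fun => x; exact: continuous_atan.
have mwc : measurable_fun setT (fun x : R => w (x + c)).
  exact: measurableT_comp mw (measurable_addr c).
have hv_int (v : R -> R) : measurable_fun setT v -> (forall x, 0 <= v x <= pi) ->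
    mu.-integrable setT (fun x => (h x * v x)%:E).
  move=> mv v_bnd; apply: (le_integrable _ _ _ (integrableZl _ pi hint)) => //.
    by apply/measurable_EFinP; exact: measurable_funM.
  move=> x _ /=; have /andP[v0 v1] := v_bnd x.
  rewrite lee_fin !ger0_norm ?mulr_ge0 ?pi_ge0 //.
  by rewrite mulrC ler_wpM2r.
have w_ge0 x : 0 <= w x by have /andP[] := w_bnd x.
have shift_w : (\int[mu]_x (h x * w (x + c))%:E = \int[mu]_x (h x * w x)%:E)%E.
  transitivity (\int[mu]_x (h ((x + c) - c) * w (x + c))%:E)%E.
    by apply: eq_integral => x _; rewrite addrK.
  rewrite (ge0_integral_addr c (fun y => (h (y - c) * w y)%:E)); first last.
  - by move=> y; rewrite lee_fin mulr_ge0.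
  - apply/measurable_EFinP; apply: measurable_funM => //.
    exact: measurableT_comp mh (measurable_addr (- c)).
  apply: ae_eq_integral => //.
  - apply/measurable_EFinP; apply: measurable_funM => //.
    exact: measurableT_comp mh (measurable_addr (- c)).
  - by apply/measurable_EFinP; exact: measurable_funM.
  - by apply: filterS hper => x /= -> _.
have : {ae mu, forall x, h x * (w (x + c) - w x) = 0}.
  apply: ae_eq0_ge0_integral_eq0.
  - by apply: measurable_funM => //; exact: measurable_funB.
  - by move=> x; rewrite mulr_ge0 // subr_ge0 ltW.
  under eq_integral do rewrite mulrBr EFinB.
  have hwc_int := hv_int _ mwc (fun x => w_bnd (x + c)).
  have hw_int := hv_int _ mw w_bnd.
  by rewrite integralB_EFin // shift_w subee // integrable_fin_num.
apply: filterS => x /eqP.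
by rewrite mulf_eq0 subr_eq0 (gt_eqF (w_lt x)) orbF => /eqP.
Qed.

Lemma ae_eq0_shift_dilation (h : R -> R) (c k : R) :
  measurable_fun setT h -> (forall x, 0 <= h x) ->
  mu.-integrable setT (EFin \o h) -> c != 0 ->
  {ae mu, forall x, h (x - c) = k * h x} -> {ae mu, forall x, h x = 0}.
Proof.
move=> mh h0 hint c_neq0 hdil.
have [k1|k_neq1] := eqVneq k 1.
  have hper : {ae mu, forall x, h (x - c) = h x}.
    by apply: filterS hdil => x ->; rewrite k1 mul1r.
  have [c_lt0|c_gt0] := ltP c 0; last first.
    by apply: ae_eq0_periodic hper; rewrite // lt_neqAle eq_sym c_neq0.
  apply: (@ae_eq0_periodic _ (- c) mh h0 hint); first by rewrite oppr_gt0.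
  by apply: filterS (ae_addr c _ hper) => x /=; rewrite addrK opprK => ->.
have int_dil : (\int[mu]_x (h x)%:E = k%:E * \int[mu]_x (h x)%:E)%E.
  rewrite -[LHS](ge0_integral_addr (- c) (EFin \o h)) //; last first.
    exact/measurable_EFinP.
  rewrite -integralZl //; apply: ae_eq_integral => //.
  - apply/measurable_EFinP; exact: measurableT_comp mh (measurable_addr (- c)).
  - by apply/measurable_EFinP; apply: measurable_funM.
  - by apply: filterS hdil => x /= -> _; rewrite EFinM.
apply: ae_eq0_ge0_integral_eq0 => //.
move: int_dil (integrable_fin_num measurableT hint).
case: (\int[mu]_x _)%E => // r [r_dil] _; congr EFin.
have /eqP : (1 - k) * r = 0 by rewrite mulrBl mul1r -r_dil subrr.
by rewrite mulf_eq0 subr_eq0 eq_sym (negbTE k_neq1) => /eqP.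
Qed.

Lemma ae_eq0_shift_proportional (g : R -> R) (c l : R) :
  measurable_fun setT g -> mu.-integrable setT (fun x => (g x ^+ 2)%:E) ->
  c != 0 -> {ae mu, forall x, g (x - c) = l * g x} ->
  {ae mu, forall x, g x = 0}.
Proof.
move=> mg g2_int c_neq0 gprop.
have : {ae mu, forall x, g x ^+ 2 = 0}.
  apply: (@ae_eq0_shift_dilation _ c (l ^+ 2)) => //.
  - exact: measurable_funX.
  - by move=> x; rewrite sqr_ge0.
  - by apply: filterS gprop => x ->; rewrite exprMn.
by apply: filterS => x /eqP; rewrite sqrf_eq0 => /eqP.
Qed.

End LebesgueTranslation.

Section GaborSystems.
Context {R : realType}.
Local Notation mu := (@lebesgue_measure R).

Lemma conjc_expi (t : R) : conjc (expi t) = expi (- t).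
Proof. by rewrite /expi /conjc cosN sinN. Qed.

Lemma conjcD (x y : R[i]) : conjc (x + y) = conjc x + conjc y.
Proof. exact: rmorphD. Qed.

Lemma conjcM (x y : R[i]) : conjc (x * y) = conjc x * conjc y.
Proof. exact: rmorphM. Qed.

Lemma conjc_TFshift (g : R -> R) (p : R * R) (x : R) :
  conjc (TFshift g p x) = TFshift g (p.1, - p.2) x.
Proof. by rewrite /TFshift conjcM conjc_real conjc_expi /= mulrN mulNr. Qed.

Lemma TFshift_translation (g : R -> R) (a x : R) :
  TFshift g (a, 0) x = ((g (x - a))%:C)%C.
Proof. by rewrite /TFshift /= mulr0 mul0r /expi cos0 sin0 mul1r. Qed.

Lemma real_proportional (z w : R[i]) : w != 0 ->
  exists l : R, forall u v : R, z * (u%:C)%C + w * (v%:C)%C = 0 -> v = l * u.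
Proof.
case: z => z1 z2; case: w => w1 w2 w_neq0.
have [w1_0|w1_neq0] := eqVneq w1 0.
  have w2_neq0 : w2 != 0 by apply: contraNneq w_neq0 => w2_0; rewrite w1_0 w2_0.
  exists (- z2 / w2) => u v [_]; rewrite w1_0 mul0r mulr0 !add0r => im_eq.
  by rewrite mulrAC -[v](mulfK w2_neq0); congr (_ * _); nra.
exists (- z1 / w1) => u v [+ _]; rewrite !mulr0 !subr0 => re_eq.
by rewrite mulrAC -[v](mulfK w1_neq0); congr (_ * _); nra.
Qed.

Lemma gabor_lin_indep4P (g : R -> R) (p0 p1 p2 p3 : R * R) :
  gabor_lin_indep g [:: p0; p1; p2; p3] <->
  (forall c0 c1 c2 c3 : R[i],
    {ae mu, forall x, c0 * TFshift g p0 x + c1 * TFshift g p1 x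
                    + c2 * TFshift g p2 x + c3 * TFshift g p3 x = 0} ->
    [/\ c0 = 0, c1 = 0, c2 = 0 & c3 = 0]).
Proof.
split=> [indep c0 c1 c2 c3 rel | indep c rel].
  suff coef0 : forall k : 'I_4, [:: c0; c1; c2; c3]`_k = 0.
    by move: (coef0 0) (coef0 1) (coef0 2) (coef0 3) => /= -> -> -> ->.
  apply: indep; apply: filterS rel => x.
  by rewrite !big_ord_recl big_ord0 addr0 !addrA.
have [] := indep (c ord0) (c (lift ord0 ord0)) (c (lift ord0 (lift ord0 ord0)))
    (c (lift ord0 (lift ord0 (lift ord0 ord0)))).
  by apply: filterS rel => x; rewrite !big_ord_recl big_ord0 addr0 !addrA.
move=> c0 c1 c2 c3 [[|[|[|[|k]]]] k_lt] //;
  [rewrite -c0 | rewrite -c1 | rewrite -c2 | rewrite -c3]; congr c; exact: val_inj.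
Qed.

Lemma gabor_lin_indep5P (g : R -> R) (p0 p1 p2 p3 p4 : R * R) :
  gabor_lin_indep g [:: p0; p1; p2; p3; p4] <->
  (forall c0 c1 c2 c3 c4 : R[i],
    {ae mu, forall x, c0 * TFshift g p0 x + c1 * TFshift g p1 x
                    + c2 * TFshift g p2 x + c3 * TFshift g p3 x
                    + c4 * TFshift g p4 x = 0} ->
    [/\ c0 = 0, c1 = 0, c2 = 0, c3 = 0 & c4 = 0]).
Proof.
split=> [indep c0 c1 c2 c3 c4 rel | indep c rel].
  suff coef0 : forall k : 'I_5, [:: c0; c1; c2; c3; c4]`_k = 0.
    by move: (coef0 0) (coef0 1) (coef0 2) (coef0 3) (coef0 4) => /= -> -> -> -> ->.
  apply: indep; apply: filterS rel => x.
  by rewrite !big_ord_recl big_ord0 addr0 !addrA.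
have [] := indep (c ord0) (c (lift ord0 ord0)) (c (lift ord0 (lift ord0 ord0)))
    (c (lift ord0 (lift ord0 (lift ord0 ord0))))
    (c (lift ord0 (lift ord0 (lift ord0 (lift ord0 ord0))))).
  by apply: filterS rel => x; rewrite !big_ord_recl big_ord0 addr0 !addrA.
move=> c0 c1 c2 c3 c4 [[|[|[|[|[|k]]]]] k_lt] //;
  [rewrite -c0 | rewrite -c1 | rewrite -c2 | rewrite -c3 | rewrite -c4];
  congr c; exact: val_inj.
Qed.

End GaborSystems.

Theorem mainTheorem1 (R : realType) (g : R -> R) (a b : R) :
  L2fun g -> nonzero_ae g ->
  gabor_lin_indep g [:: (0, 0); (0, 1); (0, -1); (a, b); (a, - b)] ->
  forall c : R, c != 0 ->
  gabor_lin_indep g [:: (0, 0); (0, 1); (c, 0); (a, b)].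
Proof.
move=> [mg g2_int] g_neq0 /gabor_lin_indep5P indep0 c c_neq0.
apply/gabor_lin_indep4P => c0 c1 c2 c3 rel.
have relC : {ae lebesgue_measure, forall x,
    conjc c0 * TFshift g (0, 0) x + conjc c1 * TFshift g (0, -1) x
    + conjc c2 * TFshift g (c, 0) x + conjc c3 * TFshift g (a, - b) x = 0}.
  apply: filterS rel => x /(congr1 conjc).
  by rewrite conjc0 !conjcD !(conjcM _ (TFshift _ _ _)) !conjc_TFshift /= oppr0.
have [|_ c1_c2 _ c3_c2 _] := indep0 (conjc c2 * c0 - c2 * conjc c0)
    (conjc c2 * c1) (- (c2 * conjc c1)) (conjc c2 * c3) (- (c2 * conjc c3)).
  apply: filterS2 rel relC => x S SC.
  have := congr2 (fun s t => conjc c2 * s - c2 * t) S SC.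
  by rewrite /= !mulr0 subrr => <-; ring.
have c2_eq0 : c2 = 0.
  have [//|c2_neq0] := eqVneq c2 0; exfalso.
  have c2C_neq0 : conjc c2 != 0 by rewrite conjc_eq0.
  have c1_eq0 : c1 = 0 by apply: (mulfI c2C_neq0); rewrite c1_c2 mulr0.
  have c3_eq0 : c3 = 0 by apply: (mulfI c2C_neq0); rewrite c3_c2 mulr0.
  have [l prop] := real_proportional c0 _ c2_neq0.
  apply/g_neq0/(@ae_eq0_shift_proportional R g c l mg g2_int c_neq0).
  apply: filterS rel => x; rewrite c1_eq0 c3_eq0 !mul0r !addr0.
  by rewrite !TFshift_translation subr0 => /prop.
have [|-> -> _ -> _] := indep0 c0 c1 0 c3 0; last by [].
by apply: filterS rel => x; rewrite c2_eq0 !mul0r !addr0.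
Qed.
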